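(* Let $X^n=(X[1],\dots,X[n])$ be any random sequence in $\{0,1\}^n$ and, for $t=1,\dots,n$, let $G_T[t]=(G_1[t],G_2[t],G_3[t])$ be i.i.d. over $t$ and independent of $X^n$, with $G_i[t]\sim\mathcal{B}(p_i)$, $i=1,2,3$, where $0\le p_2\le p_1\le 1$, $p_1>0$, and $\Pr[G_i[t]=1,G_j[t]=1]=0$ for all $i\ne j$ in $\{1,2,3\}$. Let $Y_i[t]=G_i[t]X[t]$ for $i=1,2$. Then $$H\left(Y_2^n \mid G_3^n X^n, G_T^n\right) \ge \frac{p_2}{p_1} H\left(Y_1^n \mid G_3^n X^n, G_T^n\right),$$ where $G_3^nX^n$ denotes the sequence $(G_3[1]X[1],\dots,G_3[n]X[n])$ and $G_T^n=(G_T[1],\dots,G_T[n])$.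
   Context: This is a binary fading broadcast channel from one transmitter to two receivers with no CSIT, meaning that the transmit sequence $X^n$ (with any input distribution) is independent of the channel gains. $\mathcal{B}(p)$ denotes the Bernoulli distribution taking value 1 with probability $p$. $H$ denotes Shannon entropy. *)

From mathcomp Require Import all_boot all_order all_algebra.
From mathcomp Require Import reals exp.
Set Implicit Arguments. Unset Strict Implicit. Unset Printing Implicit Defensive.
Import Order.TTheory GRing.Theory Num.Theory.
Local Open Scope ring_scope.

Definition prob {R : realType} {Omega : finType} (P : Omega -> R)
  (E : pred Omega) : R := \sum_(w | E w) P w.

(* Conditional Shannon entropy H(F | K) of the random variable F given K,
   under the pmf P on the finite sample space Omega (natural log; the
   claimed inequality is invariant under change of log base):
   H(F|K) = sum_{a,b} P(F=a,K=b) log (P(K=b) / P(F=a,K=b)), with 0 log = 0. *)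
Definition condEnt {R : realType} {Omega A B : finType} (P : Omega -> R)
  (F : Omega -> A) (K : Omega -> B) : R :=
  \sum_(a : A) \sum_(b : B)
    let pab := prob P (fun w => (F w == a) && (K w == b)) in
    let pb := prob P (fun w => K w == b) in
    if pab == 0 then 0 else pab * ln (pb / pab).

Definition gain := (bool * bool * bool)%type.
Definition G1 (g : gain) : bool := g.1.1.
Definition G2 (g : gain) : bool := g.1.2.
Definition G3 (g : gain) : bool := g.2.

(* Sample space: input sequence X^n and gain sequence G_T^n. *)
Definition omega (n : nat) : finType :=
  ({ffun 'I_n -> bool} * {ffun 'I_n -> gain})%type.

Definition jointP {R : realType} (n : nat) (PX : {ffun 'I_n -> bool} -> R)
  (q : gain -> R) : omega n -> R :=
  fun w => PX w.1 * \prod_(t < n) q (w.2 t).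

Definition Yn (n : nat) (Gi : gain -> bool) (w : omega n) : {ffun 'I_n -> bool} :=
  [ffun t => Gi (w.2 t) && w.1 t].

Definition condVar (n : nat) (w : omega n) :=
  (Yn G3 w, w.2).

(* Given the gain sequence, both conditional entropies are averages of H(X_{S_i} | X_{S_3}),
   where S_i is the set of times at which G_i = 1.  As the gains are mutually exclusive,
   (S_2, S_3) has the same law as (S_1 :&: E, S_3) for an independent random set E that
   contains each time with probability p2/p1.  Erasing each time of A independently with
   keep-probability r retains at least the fraction r of H(X_A | X_T): telescoping along
   time, a kept time contributes its entropy increment conditioned on fewer earlier
   coordinates, which is larger by submodularity of S |-> H(X_S). *)

From mathcomp Require Import all_boot all_order all_algebra.
From mathcomp Require Import reals exp.
From mathcomp Require Import ring lra.
Import Order.TTheory GRing.Theory Num.Theory.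
Local Open Scope ring_scope.

Lemma divrr_le1 (F : numFieldType) (x : F) : x / x <= 1.
Proof. by have [->|x0] := eqVneq x 0; rewrite ?mul0r ?divff. Qed.

Lemma ln_le_subr1 (R : realType) (x : R) : 0 < x -> ln x <= x - 1.
Proof. by move=> x0; rewrite -[x in ln x](subrKC 1) le_ln1Dx // ltrBrDl subrr. Qed.

Section Entropy.
Context {R : realType} {O : finType} (P : O -> R).
Hypothesis P_ge0 : forall w, 0 <= P w.

Lemma prob_ge0 E : 0 <= prob P E.
Proof. exact: sumr_ge0. Qed.

Lemma ler_prob (E : pred O) w : E w -> P w <= prob P E.
Proof. by move=> Ew; rewrite /prob (bigD1 w) //= lerDl sumr_ge0. Qed.

Definition cellP {K : eqType} (k : O -> K) w := prob P (fun v => k v == k w).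

Definition ent {K : eqType} (k : O -> K) := - \sum_w P w * ln (cellP k w).

Lemma cellP_gt0 {K : eqType} (k : O -> K) w : 0 < P w -> 0 < cellP k w.
Proof. by move=> Pw; apply: lt_le_trans Pw (ler_prob _ _ _). Qed.

Lemma eq_cellP {K1 K2 : eqType} (k1 : O -> K1) (k2 : O -> K2) w1 w2 :
  (forall v, (k1 v == k1 w1) = (k2 v == k2 w2)) -> cellP k1 w1 = cellP k2 w2.
Proof. by move=> k12; apply: eq_bigl => v; rewrite k12. Qed.

Lemma eq_ent {K1 K2 : eqType} (k1 : O -> K1) (k2 : O -> K2) :
  (forall v w, (k1 v == k1 w) = (k2 v == k2 w)) -> ent k1 = ent k2.
Proof.
by move=> k12; congr (- _); apply: eq_bigr => w _; rewrite (eq_cellP k1 k2 w w).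
Qed.

Lemma sum_cell_div_cellP_le1 {K : eqType} (k : O -> K) w :
  \sum_(v | k v == k w) P v / cellP k v <= 1.
Proof.
rewrite (eq_bigr (fun v => P v / cellP k w)) -?mulr_suml ?divrr_le1 //.
by move=> v /eqP kv; rewrite (eq_cellP k k v w) // => u; rewrite kv.
Qed.

Lemma le_cellP {KA KB : eqType} (kA : O -> KA) (kB : O -> KB) w :
  (forall u v, kA u = kA v -> kB u = kB v) -> cellP kA w <= cellP kB w.
Proof.
move=> AB; rewrite /cellP /prob [leLHS]big_mkcond [leRHS]big_mkcond.
by apply: ler_sum => v _; case: eqP => [/AB->|_]; rewrite ?eqxx //; case: ifP.
Qed.

Lemma le_ent {KA KB : eqType} (kA : O -> KA) (kB : O -> KB) :
  (forall u v, kA u = kA v -> kB u = kB v) -> ent kB <= ent kA.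
Proof.
move=> AB; rewrite lerN2; apply: ler_sum => w _.
have [->|Pw0] := eqVneq (P w) 0; first by rewrite !mul0r.
have Pw : 0 < P w by rewrite lt_def Pw0 P_ge0.
by rewrite ler_wpM2l // ler_ln ?posrE ?cellP_gt0 ?le_cellP.
Qed.

Section Submodularity.
Context {KA KB KC : eqType} (kA : O -> KA) (kB : O -> KB) (kC : O -> KC).
Hypotheses (AC : forall u v, kA u = kA v -> kC u = kC v)
           (BC : forall u v, kB u = kB v -> kC u = kC v).
Let kAB v := (kA v, kB v).

(* A nonempty cell of (kA, kB) lies in a single cell of kC. *)
Lemma sum_cell2_div_le u v :
  \sum_(w | (kA w == kA u) && (kB w == kB v)) P w / (cellP kAB w * cellP kC w)
    <= (kC u == kC v)%:R / cellP kC u.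
Proof.
case: (pickP (fun w => (kA w == kA u) && (kB w == kB v))) => [w0|none]; last first.
  by rewrite big_pred0 // divr_ge0 ?prob_ge0.
move=> /andP[/eqP A0 /eqP B0].
have -> : kC u = kC v by rewrite -(AC _ _ A0) (BC _ _ B0).
rewrite eqxx (eq_bigr (fun w => P w / cellP kAB w / cellP kC u)); last first.
  move=> w /andP[/eqP Aw _]; rewrite invfM mulrA (eq_cellP kC kC w u) // => x.
  by rewrite (AC _ _ Aw).
rewrite -mulr_suml ler_wpM2r ?invr_ge0 ?prob_ge0 //.
rewrite (eq_bigl (fun w => kAB w == kAB w0)) ?sum_cell_div_cellP_le1 // => w.
by rewrite xpair_eqE A0 B0.
Qed.

Lemma sum_cell_ratio_le :
  \sum_w P w * (cellP kA w * cellP kB w / (cellP kAB w * cellP kC w)) <= \sum_w P w.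
Proof.
have cell_sum (K : eqType) (k : O -> K) w : cellP k w = \sum_u (k u == k w)%:R * P u.
  rewrite /cellP /prob big_mkcond.
  by apply: eq_bigr => u _; case: eqP; rewrite ?mul1r ?mul0r.
apply: le_trans (_ : _ <= \sum_u \sum_v P u * P v * ((kC u == kC v)%:R / cellP kC u)) _.
  (* Expand [cellP kA w * cellP kB w] over pairs (u, v) and sum over w first. *)
  have -> : \sum_w P w * (cellP kA w * cellP kB w / (cellP kAB w * cellP kC w)) =
      \sum_u \sum_v P u * P v *
        \sum_(w | (kA w == kA u) && (kB w == kB v)) P w / (cellP kAB w * cellP kC w).
    rewrite (eq_bigr (fun w => \sum_u \sum_v (kA u == kA w)%:R * P u *
      ((kB v == kB w)%:R * P v) * (P w / (cellP kAB w * cellP kC w)))).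
      rewrite exchange_big; apply: eq_bigr => u _; rewrite exchange_big; apply: eq_bigr => v _.
      rewrite [in RHS]big_mkcond mulr_sumr; apply: eq_bigr => w _.
      by rewrite ![kA _ == kA w]eq_sym ![kB _ == kB w]eq_sym; do 2!case: eqP => _ /=; ring.
    move=> w _; rewrite [cellP kA w]cell_sum [cellP kB w]cell_sum big_distrlr /=.
    rewrite mulrCA mulr_suml.
    by apply: eq_bigr => u _; rewrite mulr_suml.
  apply: ler_sum => u _; apply: ler_sum => v _.
  by rewrite ler_wpM2l ?mulr_ge0 ?sum_cell2_div_le.
apply: ler_sum => u _.
rewrite (eq_bigr (fun v => P u / cellP kC u * ((kC v == kC u)%:R * P v))); last first.
  by move=> v _; rewrite eq_sym; ring.
by rewrite -mulr_sumr -cell_sum -mulrA ler_piMr // mulrC divrr_le1.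
Qed.

Lemma ent_submod : ent kAB + ent kC <= ent kA + ent kB.
Proof.
have pointwise w :
    P w * (ln (cellP kA w) + ln (cellP kB w) - ln (cellP kAB w) - ln (cellP kC w))
    <= P w * (cellP kA w * cellP kB w / (cellP kAB w * cellP kC w)) - P w.
  have [->|Pw0] := eqVneq (P w) 0; first by rewrite !mul0r subrr.
  have Pw : 0 < P w by rewrite lt_def Pw0 P_ge0.
  have cell_pos (K : eqType) (k : O -> K) : cellP k w \is Num.pos by rewrite posrE cellP_gt0.
  rewrite -[X in _ <= _ - X]mulr1 -mulrBr ler_pM2l //.
  have ratio_pos : cellP kA w * cellP kB w / (cellP kAB w * cellP kC w) \is Num.pos.
    by rewrite !(rpredM, rpredV) ?cell_pos.
  rewrite -lnM ?cell_pos // -!ln_div ?(rpredM, rpredV, cell_pos) // -mulrA -invfM.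
  by rewrite ln_le_subr1 -?posrE.
have : \sum_w P w * (ln (cellP kA w) + ln (cellP kB w) - ln (cellP kAB w) - ln (cellP kC w))
    <= 0.
  apply: le_trans (ler_sum _ (fun w _ => pointwise w)) _.
  by rewrite sumrB subr_le0 sum_cell_ratio_le.
rewrite (eq_bigr (fun w => P w * ln (cellP kA w) + P w * ln (cellP kB w)
  - P w * ln (cellP kAB w) - P w * ln (cellP kC w))) => [|w _]; last by ring.
rewrite !sumrB big_split /ent /=; lra.
Qed.
End Submodularity.

Lemma condEnt_chain {A B : finType} (F : O -> A) (K : O -> B) :
  condEnt P F K = ent (fun w => (F w, K w)) - ent K.
Proof.
rewrite /condEnt /ent opprK addrC -sumrB pair_bigA /=.
rewrite (partition_big (fun w => (F w, K w)) xpredT) //=; apply: eq_bigr => -[a b] _ /=.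
set pab := prob P _; set pb := prob P _.
have pab_def : pab = prob P (fun w => (F w, K w) == (a, b)) by [].
rewrite (eq_bigr (fun w => P w * (ln pb - ln pab))) => [|w /eqP[Fw Kw]]; last first.
  by rewrite mulrBr /cellP Fw Kw pab_def.
rewrite -mulr_suml -[\sum_(w | _) P w]/pab.
have [->|pab0] := eqVneq pab 0; first by rewrite mul0r.
have pab_gt0 : 0 < pab by rewrite lt_def pab0 prob_ge0.
have pb_ge : pab <= pb.
  rewrite /pab /pb /prob [leLHS]big_mkcond [leRHS]big_mkcond.
  by apply: ler_sum => w _; case: eqP; case: eqP.
by rewrite ln_div // posrE (lt_le_trans pab_gt0).
Qed.
End Entropy.

Definition restr {n} (S : {set 'I_n}) (x : {ffun 'I_n -> bool}) : {ffun 'I_n -> bool} :=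
  [ffun t => (t \in S) && x t].

Lemma restr_eqE n (S : {set 'I_n}) x y :
  (restr S x == restr S y) = [forall t in S, x t == y t].
Proof.
apply/eqP/forall_inP => [xy t tS|xy]; last first.
  by apply/ffunP => t; rewrite !ffunE; case: (boolP (t \in S)) => // /xy/eqP.
by have /ffunP/(_ t) := xy; rewrite !ffunE tS /= => ->.
Qed.

Lemma restrU_eqE n (A B : {set 'I_n}) x y :
  (restr (A :|: B) x == restr (A :|: B) y) =
  (restr A x == restr A y) && (restr B x == restr B y).
Proof.
rewrite !restr_eqE; apply/forall_inP/andP => [xy|[/forall_inP xyA /forall_inP xyB] t].
  by split; apply/forall_inP => t tS; apply: xy; rewrite inE tS ?orbT.
by rewrite inE => /orP[/xyA|/xyB].
Qed.

Lemma restr_subset n (A B : {set 'I_n}) x y :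
  A \subset B -> restr B x = restr B y -> restr A x = restr A y.
Proof.
move=> /subsetP AB /eqP; rewrite restr_eqE => /forall_inP xy.
by apply/eqP; rewrite restr_eqE; apply/forall_inP => t /AB /xy.
Qed.

Section SetEntropy.
Context {R : realType} {n : nat} (PX : {ffun 'I_n -> bool} -> R).
Hypothesis PX_ge0 : forall x, 0 <= PX x.

Definition Hset (S : {set 'I_n}) := ent PX (restr S).
Definition Hcond (A T : {set 'I_n}) := Hset (A :|: T) - Hset T.

Lemma Hset_submod (A B : {set 'I_n}) : Hset (A :|: B) + Hset (A :&: B) <= Hset A + Hset B.
Proof.
rewrite /Hset -(eq_ent PX (fun x => (restr A x, restr B x)) (restr (A :|: B))) => [|x y].
  by apply: ent_submod => // x y; apply: restr_subset; rewrite ?subsetIl ?subsetIr.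
by rewrite restrU_eqE xpair_eqE.
Qed.

Lemma le_Hset (A B : {set 'I_n}) : A \subset B -> Hset A <= Hset B.
Proof. by move=> AB; apply: le_ent => // x y; apply: restr_subset. Qed.

Lemma Hcond_increment_antitone (X Y T : {set 'I_n}) i : X \subset Y ->
  Hcond (Y :|: [set i]) T - Hcond Y T <= Hcond (X :|: [set i]) T - Hcond X T.
Proof.
move=> /subsetP XY.
have := Hset_submod (X :|: [set i] :|: T) (Y :|: T).
have -> : X :|: [set i] :|: T :|: (Y :|: T) = Y :|: [set i] :|: T.
  apply/setP => j; have := XY j; rewrite !inE.
  by case: (j \in X); case: (j \in Y); case: (j == i); case: (j \in T) => //= ->.
have : Hset (X :|: T) <= Hset ((X :|: [set i] :|: T) :&: (Y :|: T)).
  apply: le_Hset; apply/subsetP => j; have := XY j; rewrite !inE.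
  by case: (j \in X); case: (j \in Y); case: (j == i); case: (j \in T) => //= ->.
rewrite /Hcond; lra.
Qed.

End SetEntropy.

Section ProductPmf.
Context {R : realType} {n : nat} {I : finType}.

Definition iid (mu : I -> R) (g : {ffun 'I_n -> I}) : R := \prod_t mu (g t).

Lemma iid_ge0 mu g : (forall x, 0 <= mu x) -> 0 <= iid mu g.
Proof. by move=> mu0; apply: prodr_ge0. Qed.

Lemma sum_iid_cond (mu : I -> R) (Q : 'I_n -> pred I) :
  \sum_(g : {ffun 'I_n -> I} | [forall t, Q t (g t)]) iid mu g =
  \prod_t \sum_(x | Q t x) mu x.
Proof. by rewrite bigA_distr_big_dep; apply: eq_bigl => g; apply/forallP/familyP. Qed.

Lemma sum_iid_marginal (mu f : I -> R) i : \sum_x mu x = 1 ->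
  \sum_(g : {ffun 'I_n -> I}) iid mu g * f (g i) = \sum_x mu x * f x.
Proof.
move=> mu1.
rewrite (eq_bigr (fun g : {ffun 'I_n -> I} =>
  \prod_t (if t == i then mu (g t) * f (g t) else mu (g t)))).
  rewrite -(bigA_distr_bigA (fun t x => if t == i then mu x * f x else mu x)) /=.
  rewrite (bigD1 i) //= eqxx [X in _ * X]big1 ?mulr1 // => t /negbTE->; exact: mu1.
move=> g _; rewrite /iid (bigD1 i) //= [RHS](bigD1 i) //= eqxx mulrAC; congr (_ * _).
by apply: eq_bigr => t /negbTE->.
Qed.

End ProductPmf.

Definition bern {R : realType} (r : R) (b : bool) : R := if b then r else 1 - r.

Lemma sum_bern {R : realType} (r : R) : \sum_b bern r b = 1.
Proof. by rewrite big_bool /=; ring. Qed.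

Definition prefix {n} (k : nat) : {set 'I_n} := [set j : 'I_n | (j < k)%N].

Lemma setI_prefixS n (B : {set 'I_n}) (i : 'I_n) :
  B :&: prefix i.+1 = if i \in B then B :&: prefix i :|: [set i] else B :&: prefix i.
Proof.
case: ifP => iB; apply/setP => j; rewrite !inE ltnS leq_eqVlt -[(j == i :> nat)]/(j == i);
  by case: (j =P i) => [->|/eqP/negbTE ji]; rewrite ?iB ?ltnn ?ji /= ?orbF.
Qed.

Section Erasure.
Context {R : realType} {n : nat} (PX : {ffun 'I_n -> bool} -> R).
Hypothesis PX_ge0 : forall x, 0 <= PX x.
Let increment (A T : {set 'I_n}) (i : nat) :=
  Hcond PX (A :&: prefix i.+1) T - Hcond PX (A :&: prefix i) T.

Lemma Hcond_telescope (A T : {set 'I_n}) : Hcond PX A T = \sum_(i < n) increment A T i.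
Proof.
rewrite -(big_mkord xpredT (increment A T)) telescope_sumr //.
have -> : A :&: prefix n = A by apply/setP => j; rewrite !inE ltn_ord andbT.
have -> : A :&: prefix 0 = set0 by apply/setP => j; rewrite !inE ltn0 andbF.
by rewrite /Hcond set0U subrr subr0.
Qed.

Lemma increment_setI (A T E : {set 'I_n}) (i : 'I_n) :
  (i \in E)%:R * increment A T i <= increment (A :&: E) T i.
Proof.
rewrite /increment !setI_prefixS inE.
case: (boolP (i \in A)) => iA; case: (boolP (i \in E)) => iE /=;
  rewrite ?mul0r ?subrr ?mulr0 //.
rewrite mul1r; apply: Hcond_increment_antitone => //.
by apply/subsetP => j; rewrite !inE => /andP[/andP[-> _] ->].
Qed.

Lemma Hcond_erasure (r : R) (A T : {set 'I_n}) : 0 <= r <= 1 ->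
  r * Hcond PX A T <= \sum_e iid (bern r) e * Hcond PX (A :&: [set t | e t]) T.
Proof.
move=> /andP[r0 r1].
have bern_ge0 b : 0 <= bern r b by rewrite /bern; case: b; lra.
have coord_mean (i : 'I_n) :
    \sum_(e : {ffun 'I_n -> bool}) iid (bern r) e * (i \in [set t | e t])%:R = r.
  under eq_bigr do rewrite inE.
  by rewrite (sum_iid_marginal (bern r) (fun b => b%:R)) ?sum_bern // big_bool /= mulr1 mulr0 addr0.
rewrite Hcond_telescope mulr_sumr.
under [leRHS]eq_bigr do rewrite Hcond_telescope mulr_sumr.
rewrite exchange_big /=; apply: ler_sum => i _.
rewrite -[r in leLHS](coord_mean i) mulr_suml; apply: ler_sum => e _.
by rewrite -mulrA ler_wpM2l ?iid_ge0 ?increment_setI.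
Qed.

End Erasure.

Definition gainset {n} (Gi : gain -> bool) (g : {ffun 'I_n -> gain}) : {set 'I_n} :=
  [set t | Gi (g t)].

Lemma Yn_restr n Gi (w : omega n) : Yn Gi w = restr (gainset Gi w.2) w.1.
Proof. by apply/ffunP => t; rewrite !ffunE inE. Qed.

Section Decomposition.
Context {R : realType} {n : nat} (PX : {ffun 'I_n -> bool} -> R) (q : gain -> R).
Hypotheses (PX_ge0 : forall x, 0 <= PX x) (PX_sum1 : \sum_x PX x = 1)
           (q_ge0 : forall g, 0 <= q g).

Lemma cellP_jointP (S : {ffun 'I_n -> gain} -> {set 'I_n}) x g :
  cellP (jointP PX q) (fun w : omega n => (restr (S w.2) w.1, w.2)) (x, g) =
  iid q g * cellP PX (restr (S g)) x.
Proof.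
rewrite /cellP /prob -(pair_big_dep xpredT
  (fun x' g' => (restr (S g') x', g') == (restr (S g) x, g)) (fun x' g' => PX x' * iid q g')).
rewrite /= mulr_sumr.
rewrite [RHS]big_mkcond; apply: eq_bigr => x' _.
rewrite big_mkcond (bigD1 g) //= big1 ?addr0 => [|g' /negbTE neq]; last first.
  by rewrite xpair_eqE neq andbF.
by rewrite xpair_eqE eqxx andbT mulrC.
Qed.

Lemma ent_jointP (S : {ffun 'I_n -> gain} -> {set 'I_n}) :
  ent (jointP PX q) (fun w : omega n => (restr (S w.2) w.1, w.2)) =
  ent (iid q) (@id {ffun 'I_n -> gain}) + \sum_g iid q g * Hset PX (S g).
Proof.
have cell_iid g : cellP (iid q) (@id {ffun 'I_n -> gain}) g = iid q g.
  by rewrite /cellP /prob big_pred1_eq.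
rewrite /ent (eq_bigr (fun w : omega n => PX w.1 * iid q w.2 *
  (ln (iid q w.2) + ln (cellP PX (restr (S w.2)) w.1)))) => [|[x g] _]; last first.
  rewrite cellP_jointP /jointP /= -/(iid q g).
  have [->|PX0] := eqVneq (PX x) 0; first by rewrite !mul0r.
  have [->|Q0] := eqVneq (iid q g) 0; first by rewrite mulr0 !mul0r.
  have Q_pos : iid q g \is Num.pos by rewrite posrE lt_def Q0 iid_ge0.
  by rewrite lnM // posrE cellP_gt0 // lt_def PX0 PX_ge0.
rewrite -(pair_bigA _ (fun x g => PX x * iid q g *
  (ln (iid q g) + ln (cellP PX (restr (S g)) x)))) /= exchange_big /=.
rewrite (eq_bigr (fun g => iid q g * ln (iid q g) +
  iid q g * \sum_x PX x * ln (cellP PX (restr (S g)) x))) => [|g _]; last first.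
  rewrite -[iid q g * ln (iid q g)]mulr1 -PX_sum1 !mulr_sumr -big_split /=.
  by apply: eq_bigr => x _; ring.
rewrite big_split opprD /=; congr (_ + _).
  by congr (- _); apply: eq_bigr => g _; rewrite cell_iid.
by rewrite -sumrN; apply: eq_bigr => g _; rewrite /Hset /ent mulrN.
Qed.

Lemma condEnt_Yn Gi : condEnt (jointP PX q) (Yn Gi) (@condVar n) =
  \sum_g iid q g * Hcond PX (gainset Gi g) (gainset G3 g).
Proof.
have J_ge0 w : 0 <= jointP PX q w by rewrite mulr_ge0 ?iid_ge0.
rewrite condEnt_chain //.
rewrite (eq_ent _ _ (fun w : omega n => (restr (gainset Gi w.2 :|: gainset G3 w.2) w.1, w.2)));
  last first.
  move=> v w /=; rewrite /condVar !Yn_restr !xpair_eqE.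
  by case: (v.2 =P w.2) => [->|]; rewrite ?andbF ?andbT ?restrU_eqE.
rewrite (eq_ent _ (@condVar n) (fun w : omega n => (restr (gainset G3 w.2) w.1, w.2))); last first.
  by move=> v w; rewrite /condVar !Yn_restr.
rewrite (ent_jointP (fun g => gainset Gi g :|: gainset G3 g)) (ent_jointP (gainset G3)).
rewrite opprD addrACA subrr add0r -sumrB.
by apply: eq_bigr => g _; rewrite mulrBr.
Qed.

End Decomposition.

Lemma sum_by_value {R : comNzRingType} {I K : finType}
  (w : I -> R) (h : I -> K) (F : K -> R) :
  \sum_i w i * F (h i) = \sum_k F k * \sum_(i | h i == k) w i.
Proof.
rewrite (partition_big h xpredT) //; apply: eq_bigr => k _.
by rewrite mulr_sumr; apply: eq_bigr => i /eqP <-; rewrite mulrC.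
Qed.

Lemma pair_set_eqE n (P1 P2 : pred 'I_n) (A T : {set 'I_n}) :
  (([set t | P1 t], [set t | P2 t]) == (A, T)) =
  [forall t, (P1 t == (t \in A)) && (P2 t == (t \in T))].
Proof.
rewrite xpair_eqE; apply/andP/forallP => [[/eqP <- /eqP <-] t|PAT]; first by rewrite !inE !eqxx.
by split; apply/eqP/setP => t; have /andP[/eqP P1t /eqP P2t] := PAT t; rewrite inE ?P1t ?P2t.
Qed.

Section Coupling.
Context {R : realType} {n : nat} {q : gain -> R} {r : R}.
Hypothesis letter_law : forall a b : bool,
  \sum_(x | (G2 x == a) && (G3 x == b)) q x =
  \sum_x q x * \sum_(c | ((G1 x && c) == a) && (G3 x == b)) bern r c.

Let law (AT : {set 'I_n} * {set 'I_n}) :=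
  \prod_t \sum_(x | (G2 x == (t \in AT.1)) && (G3 x == (t \in AT.2))) q x.

Lemma law_gainset AT :
  \sum_(g | (gainset G2 g, gainset G3 g) == AT) iid q g = law AT.
Proof.
by case: AT => A T; rewrite /law /= -sum_iid_cond; apply: eq_bigl => g; apply: pair_set_eqE.
Qed.

Lemma law_erased_gainset AT :
  \sum_(ge : {ffun 'I_n -> gain} * {ffun 'I_n -> bool} |
         (gainset G1 ge.1 :&: [set t | ge.2 t], gainset G3 ge.1) == AT)
    iid q ge.1 * iid (bern r) ge.2 = law AT.
Proof.
case: AT => A T; rewrite /law /=.
pose Q t (x : gain) (c : bool) := ((G1 x && c) == (t \in A)) && (G3 x == (t \in T)).
rewrite -(pair_big_dep xpredT
  (fun g (e : {ffun 'I_n -> bool}) => (gainset G1 g :&: [set t | e t], gainset G3 g) == (A, T))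
  (fun g e => iid q g * iid (bern r) e)) /=.
rewrite (eq_bigr (fun g : {ffun 'I_n -> gain} =>
  \prod_t (q (g t) * \sum_(c | Q t (g t) c) bern r c))) => [|g _].
  rewrite -(bigA_distr_bigA (fun t x => q x * \sum_(c | Q t x c) bern r c)) /=.
  by apply: eq_bigr => t _; rewrite letter_law.
rewrite big_split /= -mulr_sumr -sum_iid_cond; congr (_ * _); apply: eq_bigl => e.
have -> : gainset G1 g :&: [set t | e t] = [set t | G1 (g t) && e t].
  by apply/setP => t; rewrite !inE.
exact: pair_set_eqE.
Qed.

Lemma erasure_coupling (Psi : {set 'I_n} -> {set 'I_n} -> R) :
  \sum_g iid q g * Psi (gainset G2 g) (gainset G3 g) =
  \sum_g iid q g * \sum_e iid (bern r) e * Psi (gainset G1 g :&: [set t | e t]) (gainset G3 g).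
Proof.
rewrite (sum_by_value _ (fun g => (gainset G2 g, gainset G3 g)) (fun AT => Psi AT.1 AT.2)).
under [RHS]eq_bigr do rewrite mulr_sumr.
rewrite pair_bigA /=.
rewrite (eq_bigr (fun ge : {ffun 'I_n -> gain} * {ffun 'I_n -> bool} =>
  iid q ge.1 * iid (bern r) ge.2 * Psi (gainset G1 ge.1 :&: [set t | ge.2 t]) (gainset G3 ge.1)))
  => [|ge _]; last by rewrite mulrA.
rewrite (sum_by_value _ (fun ge : {ffun 'I_n -> gain} * {ffun 'I_n -> bool} =>
  (gainset G1 ge.1 :&: [set t | ge.2 t], gainset G3 ge.1)) (fun AT => Psi AT.1 AT.2)).
by apply: eq_bigr => AT _; rewrite law_gainset law_erased_gainset.
Qed.

End Coupling.

Lemma sum_gainE {R : comNzRingType} (F : gain -> R) :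
  \sum_g F g = F (true, true, true) + F (true, true, false) + F (true, false, true)
    + F (true, false, false) + F (false, true, true) + F (false, true, false)
    + F (false, false, true) + F (false, false, false).
Proof.
rewrite (eq_bigr (fun g : gain => F (g.1, g.2))) => [|[]//].
rewrite -(pair_bigA _ (fun ab c => F (ab, c))) /=.
rewrite (eq_bigr (fun ab : bool * bool => \sum_c F ((ab.1, ab.2), c))) => [|[]//].
by rewrite -(pair_bigA _ (fun a b => \sum_c F ((a, b), c))) /= !big_bool /= !addrA.
Qed.

Lemma gain_letter_law {R : realType} {q : gain -> R} {p1 p2 : R} :
  (forall g, 0 <= q g) ->
  \sum_(g | G1 g) q g = p1 -> \sum_(g | G2 g) q g = p2 -> p1 != 0 ->
  \sum_(g | G1 g && G2 g) q g = 0 -> \sum_(g | G1 g && G3 g) q g = 0 ->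
  \sum_(g | G2 g && G3 g) q g = 0 ->
  forall a b : bool, \sum_(x | (G2 x == a) && (G3 x == b)) q x =
    \sum_x q x * \sum_(c | ((G1 x && c) == a) && (G3 x == b)) bern (p2 / p1) c.
Proof.
move=> q_ge0 + + p1_neq0; do 5!(rewrite big_mkcond sum_gainE /G1 /G2 /G3 /=; move=> ?).
move=> a b.
have := q_ge0 (true, true, true); have := q_ge0 (true, true, false).
have := q_ge0 (true, false, true); have := q_ge0 (false, true, true) => ? ? ? ?.
have q_ttt : q (true, true, true) = 0 by lra.
have q_ttf : q (true, true, false) = 0 by lra.
have q_tft : q (true, false, true) = 0 by lra.
have q_ftt : q (false, true, true) = 0 by lra.
have r_def : q (true, false, false) * (p2 / p1) = q (false, true, false).
  have -> : q (true, false, false) = p1 by lra.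
  by rewrite mulrC divfK //; lra.
under [RHS]eq_bigr do rewrite big_mkcond big_bool /bern.
rewrite big_mkcond !sum_gainE /G1 /G2 /G3 /= q_ttt q_ttf q_tft q_ftt.
by case: a; case: b => /=; lra.
Qed.

Theorem lemma1 (R : realType) (n : nat)
  (PX : {ffun 'I_n -> bool} -> R) (q : gain -> R) (p1 p2 p3 : R) :
  (forall x, 0 <= PX x) -> \sum_x PX x = 1 ->
  (forall g, 0 <= q g) -> \sum_g q g = 1 ->
  \sum_(g | G1 g) q g = p1 ->
  \sum_(g | G2 g) q g = p2 ->
  \sum_(g | G3 g) q g = p3 ->
  0 <= p2 -> p2 <= p1 -> p1 <= 1 -> 0 < p1 ->
  \sum_(g | G1 g && G2 g) q g = 0 ->
  \sum_(g | G1 g && G3 g) q g = 0 ->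
  \sum_(g | G2 g && G3 g) q g = 0 ->
  condEnt (jointP PX q) (Yn G2) (@condVar n)
    >= p2 / p1 * condEnt (jointP PX q) (Yn G1) (@condVar n).
Proof.
move=> PX_ge0 PX_sum1 q_ge0 _ q1 q2 _ p2_ge0 p21 _ p1_gt0 q12 q13 q23.
have r01 : 0 <= p2 / p1 <= 1.
  by rewrite divr_ge0 ?(ltW p1_gt0) //= ler_pdivrMr // mul1r.
have law := gain_letter_law q_ge0 q1 q2 (lt0r_neq0 p1_gt0) q12 q13 q23.
rewrite !condEnt_Yn // (erasure_coupling law) mulr_sumr.
apply: ler_sum => g _; rewrite mulrCA ler_wpM2l ?iid_ge0 //.
exact: Hcond_erasure.
Qed.
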